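(* Let $E$ be a countable subset of $2^{\mathfrak c}$, let $\emptyset\neq I\subseteq E$, and let $F\subseteq E$ be finite. For each $\xi\in I$ let $k_\xi\in\omega$, let $\{p_\xi:\xi\in I\}$ be a family of pairwise Rudin–Keisler incomparable selective ultrafilters, let $g_\xi:\omega\to([E]^{<\omega})^{k_\xi}$ be a function such that the family $\{g^j_\xi(m):j<k_\xi,\ m\in\omega\}$ is linearly independent, and let $d_\xi\in([E]^{<\omega})^{k_\xi}$. Let also $\{y_n:n\in\omega\}\subseteq E$ be a faithfully indexed (injective) sequence. Then there exist a strictly increasing sequence $\{b_i:i\in\omega\}\subseteq\omega$, a surjective function $r:\omega\to I$ and a sequence $\{E_i:i\in\omega\}$ of finite subsets of $E$ such that: (a) $F\subseteq E_0$; (b) $E=\bigcup_{i\in\omega}E_i$; (c) $r(m)\in E_m$ for each $m\in\omega$; (d) $\bigcup\{d^j_{r(m)}:j<k_{r(m)}\}\subseteq E_m$ for each $m\in\omega$; (e) $E_{m+1}\supseteq \bigcup\{g^j_\xi(b_m):\xi\in E_m\cap I,\ j<k_\xi\}\cup E_m$ for each $m\in\omega$; (f) $\{g^j_{r(m)}(b_m):j<k_{r(m)}\}\cup\{\{\mu\}:\mu\in E_m\}$ is linearly independent for each $m\in\omega$; (g) $\{b_i:i\in r^{-1}(\xi)\}\in p_\xi$ for every $\xi\in I$; (h) there is a strictly increasing sequence $(N_i)_{i\in\omega}$ of natural numbers such that $\{n\in\omega:y_n\in E_i\}=\{0,1,\dots,2N_i-1\}$ for each $i\in\omega$.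
   Context: $\mathfrak c$ is the cardinality of the continuum and $2^{\mathfrak c}$ is regarded as a set of ordinals. $[E]^{<\omega}$ is the set of finite subsets of $E$, a vector space over the field $2=\{0,1\}$ under symmetric difference; linear independence refers to this structure (for indexed families, so members are distinct). For a tuple $g\in([E]^{<\omega})^k$, $g^j$ denotes its $j$-th coordinate. Selective ultrafilter: a free ultrafilter $p$ on $\omega$ such that for every partition $\{A_n\}$ of $\omega$ either some $A_n\in p$ or some $B\in p$ meets each $A_n$ in exactly one point. Rudin–Keisler order: $p\le_{RK}q$ iff $p=\{A: f^{-1}(A)\in q\}$ for some $f:\omega\to\omega$; incomparable means neither $p\le_{RK}q$ nor $q\le_{RK}p$. *)

From HB Require Import structures.
From mathcomp Require Import all_boot.
From mathcomp Require Import finmap.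
Set Implicit Arguments. Unset Strict Implicit. Unset Printing Implicit Defensive.
Local Open Scope fset_scope.

Definition countable_set (T : Type) (E : T -> Prop) : Prop :=
  exists f : nat -> T, forall x, E x -> exists n, f n = x.

(* Symmetric difference: the addition of the F_2-vector space [E]^{<omega}. *)
Definition symdiff (T : choiceType) (A B : {fset T}) : {fset T} :=
  (A `\` B) `|` (B `\` A).

Definition fsum (J T : choiceType) (S : {fset J}) (v : J -> {fset T}) : {fset T} :=
  \big[@symdiff T/fset0]_(i <- S) v i.

Definition lin_indep (J T : choiceType) (D : J -> Prop) (v : J -> {fset T}) : Prop :=
  forall S : {fset J}, (forall j, j \in S -> D j) -> S != fset0 ->
    fsum S v != fset0.

Definition ultrafilter (p : (nat -> Prop) -> Prop) : Prop :=
  [/\ ~ p (fun _ => False),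
      (forall A B : nat -> Prop, p A -> (forall n, A n -> B n) -> p B),
      (forall A B : nat -> Prop, p A -> p B -> p (fun n => A n /\ B n)) &
      (forall A : nat -> Prop, p A \/ p (fun n => ~ A n))].

Definition free_ultrafilter (p : (nat -> Prop) -> Prop) : Prop :=
  ultrafilter p /\ forall A : nat -> Prop, p A -> forall m, exists n, m <= n /\ A n.

Definition is_partition (A : nat -> nat -> Prop) : Prop :=
  [/\ (forall n, exists x, A n x),
      (forall n m x, n <> m -> A n x -> A m x -> False) &
      (forall x, exists n, A n x)].

Definition selective (p : (nat -> Prop) -> Prop) : Prop :=
  free_ultrafilter p /\
  forall A : nat -> nat -> Prop, is_partition A ->
    (exists n, p (A n)) \/
    (exists B : nat -> Prop, p B /\
       forall n, exists x, (B x /\ A n x) /\ forall z, B z -> A n z -> z = x).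

Definition RK_le (p q : (nat -> Prop) -> Prop) : Prop :=
  exists f : nat -> nat, forall A : nat -> Prop, p A <-> q (fun n => A (f n)).

Definition RK_incomparable (p q : (nat -> Prop) -> Prop) : Prop :=
  ~ RK_le p q /\ ~ RK_le q p.

From HB Require Import structures.
From mathcomp Require Import all_boot finmap zify.
From Stdlib Require Import ClassicalEpsilon.
Set Implicit Arguments. Unset Strict Implicit. Unset Printing Implicit Defensive.
Local Open Scope fset_scope.

(* Enumerate E so that y (2q) and y (2q+1) follow the q-th remaining point,
   and take every E_m to be an initial segment of this enumeration: this
   gives (h).  E_{m+1} is chosen long enough to contain the sets g_xi(b_m)
   for xi in E_m, which gives (e).  Because the whole family g_xi^j(m) is
   linearly independent, a finite set is independent from the block
   {g_xi^j(b) : j < k_xi} for all but finitely many b, and (f) asks b_m to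
   be beyond that bound.  All these bounds grow monotonically, so they are met
   as soon as consecutive b_m lie at least two blocks apart in a fast-growing
   partition of omega into intervals.  Selectivity, the P-point property and
   RK-incomparability give sets V_xi in p_xi whose points lie one per block,
   in blocks of one parity, and such that points of different V_xi never lie
   in adjacent blocks.  The increasing enumeration of the union of the V_xi is
   b, and r(m) is the xi with b_m in V_xi, so (g) holds. *)

(** * Choice and enumerations *)

Lemma epsilon_under (A : Type) (a0 : A) (C : Prop) (P : A -> Prop) :
  (C -> exists x, P x) -> C -> P (epsilon (inhabits a0) (fun x => C -> P x)).
Proof.
move=> exP HC; have [x Px] := exP HC.
exact: (epsilon_spec _ _ (ex_intro _ x (fun _ => Px)) HC).
Qed.

Lemma exists_least (P : nat -> Prop) :
  (exists n, P n) -> exists n, P n /\ forall m, P m -> n <= m.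
Proof.
case=> n Pn; apply: NNPP => nomin; elim/ltn_ind: n Pn => n IH Pn.
apply: nomin; exists n; split=> // m Pm; rewrite leqNgt; apply/negP => lt_mn.
exact: IH lt_mn Pm.
Qed.

Definition least (P : nat -> Prop) : nat :=
  epsilon (inhabits 0) (fun n => P n /\ forall m, P m -> n <= m).

Lemma leastP (P : nat -> Prop) :
  (exists n, P n) -> P (least P) /\ forall m, P m -> least P <= m.
Proof. by move/exists_least; apply: epsilon_spec. Qed.

Section CountableEnumeration.
Variables (T : Type) (A : T -> Prop) (a0 : T).
Hypotheses (A_countable : countable_set A) (A_a0 : A a0).

Definition cenum (n : nat) : T :=
  let f := epsilon (inhabits (fun _ => a0)) (fun f => forall x, A x -> exists n, f n = x) in
  if excluded_middle_informative (A (f n)) then f n else a0.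

Definition cindex (x : T) : nat := epsilon (inhabits 0) (fun n => cenum n = x).

Lemma cenumP n : A (cenum n).
Proof. by rewrite /cenum; case: excluded_middle_informative. Qed.

Lemma cenum_onto x : A x -> exists n, cenum n = x.
Proof.
move=> Ax; have [n fn] := epsilon_spec (inhabits (fun _ => a0)) _ A_countable x Ax.
by exists n; rewrite /cenum fn; case: excluded_middle_informative.
Qed.

Lemma cindexK x : A x -> cenum (cindex x) = x.
Proof. by move/cenum_onto; apply: epsilon_spec. Qed.

End CountableEnumeration.

Lemma countable_subset (T : Type) (A B : T -> Prop) :
  countable_set B -> (forall x, A x -> B x) -> countable_set A.
Proof. by case=> f fB AB; exists f => x /AB /fB. Qed.

Section InfiniteEnumeration.
Variable S : nat -> Prop.
Hypothesis S_unbounded : forall m, exists x, S x /\ m < x.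

Fixpoint sorted_enum m : nat :=
  if m is m'.+1 then least (fun x => S x /\ sorted_enum m' < x) else least S.

Lemma sorted_enumS_spec m :
  S (sorted_enum m.+1) /\ sorted_enum m < sorted_enum m.+1 /\
  forall x, S x -> sorted_enum m < x -> sorted_enum m.+1 <= x.
Proof.
have [[Sm lt_m] min_m] := leastP (S_unbounded (sorted_enum m)).
by do 2!split=> //; move=> x Sx lt_x; apply: min_m.
Qed.

Lemma sorted_enum0_min x : S x -> sorted_enum 0 <= x.
Proof. by have [z [Sz _]] := S_unbounded 0; case: (leastP (ex_intro _ z Sz)) => _; apply. Qed.

Lemma sorted_enumP m : S (sorted_enum m).
Proof.
case: m => [|m]; last by case: (sorted_enumS_spec m).
by have [z [Sz _]] := S_unbounded 0; case: (leastP (ex_intro _ z Sz)).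
Qed.

Lemma sorted_enum_lt m : sorted_enum m < sorted_enum m.+1.
Proof. by case: (sorted_enumS_spec m) => _ []. Qed.

Lemma sorted_enum_ge m : m <= sorted_enum m.
Proof. by elim: m => // m IH; apply: leq_ltn_trans IH (sorted_enum_lt m). Qed.

Lemma sorted_enum_onto x : S x -> exists m, sorted_enum m = x.
Proof.
move=> Sx; suff : forall m, x < sorted_enum m -> exists i, sorted_enum i = x.
  by apply; apply: leq_trans (sorted_enum_ge x.+1).
elim=> [|m IH] lt_x; first by move: (sorted_enum0_min Sx); rewrite leqNgt lt_x.
case: (ltngtP x (sorted_enum m)) => [/IH //|lt_mx|]; last by exists m.
by case: (sorted_enumS_spec m) => _ [_ /(_ x Sx lt_mx)]; rewrite leqNgt lt_x.
Qed.

End InfiniteEnumeration.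

(** * Partitioning omega into blocks *)

Section Blocks.
Variable gap : nat -> nat.
Hypothesis gap_mono : {homo gap : x y / x <= y}.

Fixpoint block_start n : nat :=
  if n is n'.+1 then (block_start n' + gap (block_start n')).+1 else 0.

Fixpoint block x : nat :=
  if x is x'.+1 then
    (if block_start (block x').+1 <= x then (block x').+1 else block x')
  else 0.

Lemma block_start_lt n : block_start n < block_start n.+1.
Proof. by rewrite /= ltnS leq_addr. Qed.

Lemma block_start_mono : {homo block_start : n m / n <= m}.
Proof. by apply: homo_leq leqnn leq_trans _ => n; apply: ltnW (block_start_lt n). Qed.

Lemma block_spec x : block_start (block x) <= x < block_start (block x).+1.
Proof.
elim: x => [|x /andP [lo hi]] //=; case: ifP => [start_le | /negbT].
  by rewrite start_le /=; apply: leq_ltn_trans hi (block_start_lt _).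
by rewrite -ltnNge => ->; rewrite (leq_trans lo).
Qed.

Lemma block_mono : {homo block : x y / x <= y}.
Proof.
move=> x x' le_xx'; rewrite leqNgt; apply/negP => lt_blocks.
have /andP [lo _] := block_spec x; have /andP [_ hi] := block_spec x'.
have := block_start_mono lt_blocks; lia.
Qed.

Lemma block_bounded n x : block x <= n -> x < block_start n.+1.
Proof.
by move=> le_n; case/andP: (block_spec x) => _ /leq_trans; apply; apply: block_start_mono.
Qed.

(* Consecutive block starts are [gap]-apart, so two blocks apart means far apart. *)
Lemma block_far x x' : (block x).+2 <= block x' -> gap x < x'.
Proof.
move=> far; case/andP: (block_spec x') => lo _.
apply: leq_trans lo; apply: leq_trans (block_start_mono far).
rewrite /= ltnS; apply: leq_trans (leq_addl _ _); apply: gap_mono.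
by case/andP: (block_spec x) => _ /ltnW.
Qed.

End Blocks.

(** * Ultrafilters on omega *)

Section Ultrafilter.
Variable p : (nat -> Prop) -> Prop.
Hypothesis p_free : free_ultrafilter p.

Lemma uf_mono A B : p A -> (forall n, A n -> B n) -> p B.
Proof. by case: p_free => [[_ up _ _] _]; apply: up. Qed.

Lemma uf_meet A B : p A -> p B -> p (fun n => A n /\ B n).
Proof. by case: p_free => [[_ _ meet _] _]; apply: meet. Qed.

Lemma uf_exists A : p A -> exists n, A n.
Proof.
case: p_free => [[p_proper _ _ _] _] pA; apply: NNPP => noA; apply: p_proper.
by apply: (uf_mono pA) => n An; apply: noA; exists n.
Qed.

Lemma uf_compl A : ~ p A -> p (fun n => ~ A n).
Proof. by case: p_free => [[_ _ _ p_ultra] _] npA; case: (p_ultra A). Qed.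

Lemma uf_not_compl A : p A -> ~ p (fun n => ~ A n).
Proof. by move=> pA /(uf_meet pA) /uf_exists [n []]. Qed.

Lemma uf_join A B : p (fun n => A n \/ B n) -> p A \/ p B.
Proof.
move=> pAB; apply: NNPP => nAB; apply: (uf_not_compl pAB).
have [npA npB] : ~ p A /\ ~ p B by tauto.
by apply: (uf_mono (uf_meet (uf_compl npA) (uf_compl npB))) => n []; tauto.
Qed.

Lemma uf_join3 A B C : p (fun n => A n \/ B n \/ C n) -> p A \/ p B \/ p C.
Proof. by case/uf_join => [|/uf_join]; tauto. Qed.

Lemma uf_not_bounded A M : (forall n, A n -> n < M) -> ~ p A.
Proof.
case: p_free => _ p_infinite boundA /p_infinite /(_ M) [n [le_Mn /boundA]].
by rewrite ltnNge le_Mn.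
Qed.

Lemma uf_tail m : p (fun n => m <= n).
Proof.
apply: NNPP => /uf_compl ptail; apply: (uf_not_bounded (M := m)) ptail => n.
by rewrite ltnNge => /negP.
Qed.

End Ultrafilter.

Lemma uf_parity (p : (nat -> Prop) -> Prop) (f : nat -> nat) :
  free_ultrafilter p -> exists b, p (fun x => odd (f x) = b).
Proof.
move=> p_free; case: (p_free) => [[_ _ _ /(_ (fun x => odd (f x) = true))]] [] pA _.
  by exists true.
by exists false; apply: (uf_mono p_free pA) => x /negP /negbTE.
Qed.

Section Selective.
Variable p : (nat -> Prop) -> Prop.
Hypothesis p_sel : selective p.

Let p_free : free_ultrafilter p. Proof. by case: p_sel. Qed.

Lemma selective_onto (h : nat -> nat) : (forall n, exists x, h x = n) ->
  (exists n, p (fun x => h x = n)) \/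
  (exists B, p B /\ forall x x', B x -> B x' -> h x = h x' -> x = x').
Proof.
move=> h_onto; have fibres : is_partition (fun n x => h x = n).
  by split=> [|n m x ne_nm -> /ne_nm|x]; last exists (h x).
case: p_sel => _ /(_ _ fibres) [|[B [pB Bsel]]]; [by left | right].
exists B; split=> // x x' Bx Bx' hxx'; case: (Bsel (h x)) => x0 [_ x0_uniq].
by rewrite (x0_uniq x Bx erefl) (x0_uniq x' Bx' (esym hxx')).
Qed.

(* Glue [c] on one parity class to a bijection on the other, to get a surjection. *)
Lemma selective_const_or_inj (c : nat -> nat) :
  (exists n, p (fun x => c x = n)) \/
  (exists B, p B /\ forall x x', B x -> B x' -> c x = c x' -> x = x').
Proof.
have [b pb] := uf_parity id p_free.
pose h x := if odd x == b then c x else x./2.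
have h_onto n : exists x, h x = n.
  exists ((~~ b) + n.*2)%N; rewrite /h oddD odd_double addbF.
  by case: b {pb h} => /=; rewrite ?add0n ?add1n /= ?doubleK ?uphalf_double.
case: (selective_onto h_onto) => [[n pn] | [B [pB h_inj]]].
  left; exists n; apply: (uf_mono p_free (uf_meet p_free pn pb)) => x [].
  by rewrite /h => <- ->; rewrite eqxx.
right; exists (fun x => B x /\ odd x = b); split; first exact: uf_meet.
by move=> x x' [Bx bx] [Bx' bx'] cxx'; apply: h_inj; rewrite // /h bx bx' eqxx.
Qed.

(* Selective ultrafilters are P-points: [c x] is the first [n] with [x] outside
   [X 0 /\ ... /\ X n], and [c] cannot be constant on a member of [p]. *)
Lemma selective_pseudo_intersection (X : nat -> nat -> Prop) :
  (forall n, p (X n)) ->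
  exists Y, p Y /\ forall n, exists M, forall x, Y x -> ~ X n x -> x < M.
Proof.
move=> pX; pose Z n x := (forall i, i <= n -> X i x) /\ n <= x.
have pZ n : p (Z n).
  elim: n => [|n IH].
    apply: (uf_mono p_free (uf_meet p_free (pX 0) (uf_tail p_free 0))) => x [X0x _].
    by split=> // i; rewrite leqn0 => /eqP ->.
  apply: (uf_mono p_free (uf_meet p_free (uf_meet p_free IH (pX n.+1)) (uf_tail p_free n.+1))).
  move=> x [[[Xx _] Xn1x] le_x]; split=> // i.
  by rewrite leq_eqVlt ltnS => /orP [/eqP -> | /Xx].
pose c x := least (fun n => ~ Z n x).
have cP x : ~ Z (c x) x /\ forall m, ~ Z m x -> c x <= m.
  by apply: leastP; exists x.+1 => [[_]]; rewrite ltnn.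
case: (selective_const_or_inj c) => [[n pn] | [B [pB c_inj]]].
  exfalso; apply: (uf_not_compl p_free (pZ n)).
  by apply: (uf_mono p_free pn) => x <-; apply: (cP x).1.
exists B; split=> // n.
pose sel i := epsilon (inhabits 0) (fun x => B x /\ c x = i).
exists (\max_(i < n.+1) (sel i).+1) => x Bx nXx.
have le_cx : c x <= n by apply: (cP x).2 => -[/(_ n (leqnn n))].
have [Bs cs] : B (sel (c x)) /\ c (sel (c x)) = c x.
  by apply: (epsilon_spec (inhabits 0) (fun z => B z /\ c z = c x)); exists x.
rewrite -(c_inj _ _ Bs Bx cs); exact: (leq_bigmax (Ordinal (le_cx : c x < n.+1))).
Qed.

End Selective.

Lemma not_RK_le_witness (q1 q2 : (nat -> Prop) -> Prop) (f : nat -> nat) :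
  free_ultrafilter q1 -> free_ultrafilter q2 -> ~ RK_le q1 q2 ->
  exists A, q1 A /\ ~ q2 (fun n => A (f n)).
Proof.
move=> q1_free q2_free nRK; apply: NNPP => noA; apply: nRK; exists f => A; split.
  by move=> q1A; apply: NNPP => nq2A; apply: noA; exists A.
move=> q2A; apply: NNPP => nq1A; apply: noA; exists (fun n => ~ A n).
by split; [apply: uf_compl | exact: (uf_not_compl q2_free q2A)].
Qed.

(* Apply [not_RK_le_witness] to a selector of the partial inverse of [R]. *)
Lemma not_RK_le_rel (q1 q2 : (nat -> Prop) -> Prop) (Y : nat -> Prop)
    (R : nat -> nat -> Prop) :
  free_ultrafilter q1 -> free_ultrafilter q2 -> ~ RK_le q1 q2 ->
  (forall x1 x2 x', Y x1 -> Y x2 -> R x1 x' -> R x2 x' -> x1 = x2) ->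
  exists A, q1 A /\ ~ q2 (fun x' => exists x, [/\ Y x, A x & R x x']).
Proof.
move=> q1_free q2_free nRK R_inj.
pose s x' := epsilon (inhabits 0) (fun x => Y x /\ R x x').
have [A [q1A nq2A]] := not_RK_le_witness s q1_free q2_free nRK.
exists A; split=> // q2A; apply: nq2A; apply: (uf_mono q2_free q2A) => x' [x [Yx Ax Rx]].
have [Ys Rs] : Y (s x') /\ R (s x') x'.
  by apply: (epsilon_spec (inhabits 0) (fun z => Y z /\ R z x')); exists x.
by rewrite /= (R_inj _ _ _ Ys Yx Rs Rx).
Qed.

(** * Linear independence over 2 *)

Definition ssum (J : Type) (T : choiceType) (s : seq J) (v : J -> {fset T}) : {fset T} :=
  \big[@symdiff T/fset0]_(i <- s) v i.

Lemma mem_symdiff (T : choiceType) (A B : {fset T}) x :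
  (x \in symdiff A B) = (x \in A) (+) (x \in B).
Proof. by rewrite /symdiff !inE; case: (x \in A); case: (x \in B). Qed.

Lemma mem_ssum (J : Type) (T : choiceType) (s : seq J) (v : J -> {fset T}) x :
  (x \in ssum s v) = odd (count (fun i => x \in v i) s).
Proof.
elim: s => [|i s IH]; first by rewrite /ssum big_nil inE.
by rewrite /ssum big_cons mem_symdiff -/(ssum _ _) IH /= oddD; case: (x \in v i).
Qed.

Section SumSplit.
Variables (J T : Type).

Definition left_part (s : seq (J + T)) : seq J :=
  pmap (fun u => if u is inl j then Some j else None) s.
Definition right_part (s : seq (J + T)) : seq T :=
  pmap (fun u => if u is inr t then Some t else None) s.

Lemma count_sum_split (P : J + T -> bool) s :
  count P s = (count (fun j => P (inl j)) (left_part s)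
                + count (fun t => P (inr t)) (right_part s))%N.
Proof. by elim: s => // -[j|t] s IH; rewrite /= IH; [rewrite addnA | rewrite addnCA]. Qed.

End SumSplit.

(* A vanishing combination of [h] and singletons of [W] makes a combination
   of [h] equal to the set of singletons used, which is a subset of [W]. *)
Lemma lin_indep_add_singletons (J T : choiceType) (D : J -> Prop)
    (h : J -> {fset T}) (W : {fset T}) :
  (forall s : seq J, uniq s -> s != [::] -> (forall j, j \in s -> D j) ->
     ~ ssum s h `<=` W) ->
  lin_indep (fun u : J + T => match u with inl j => D j | inr mu => mu \in W end)
            (fun u => match u with inl j => h j | inr mu => [fset mu] end).
Proof.
move=> no_comb S SD S_ne0; apply/negP => /eqP sum0.
pose s := left_part S; pose sR := right_part S.
have mem_s j : (j \in s) = (inl j \in S).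
  by rewrite /s /left_part (@can2_mem_pmap _ _ _ inl) //; case.
have mem_sR t : (t \in sR) = (inr t \in S).
  by rewrite /sR /right_part (@can2_mem_pmap _ _ _ inr) //; case.
have mem_comb x : (x \in ssum s h) = (x \in sR).
  have := mem_ssum S (fun u => match u with inl j => h j | inr mu => [fset mu] end) x.
  rewrite -[ssum _ _]/(fsum S _) sum0 inE count_sum_split -/s -/sR oddD.
  have -> : count (fun t => x \in [fset t]) sR = count_mem x sR.
    by apply: eq_count => t /=; rewrite inE eq_sym.
  rewrite count_uniq_mem ?mem_ssum; last first.
    by apply: (@pmap_uniq _ _ _ inr); [case | exact: fset_uniq].
  by case: (odd _); case: (x \in sR).
case Es: s => [|j s'].
  case/fset0Pn: S_ne0 => -[j | mu] Su; first by move: (mem_s j); rewrite Su Es.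
  by move: (mem_comb mu); rewrite Es mem_sR Su /ssum big_nil inE.
apply: (no_comb s); rewrite ?Es //.
- by rewrite -Es /s; apply: (@pmap_uniq _ _ _ inl); [case | exact: fset_uniq].
- by move=> i; rewrite -Es mem_s => /SD.
- by apply/fsubsetP => x; rewrite -Es mem_comb mem_sR => /SD.
Qed.

Section IndependentBlocks.
Variables (T : choiceType) (k : nat) (g : nat -> nat -> {fset T}).
Hypothesis g_indep : lin_indep (fun jm : nat * nat => jm.1 < k) (fun jm => g jm.2 jm.1).

Definition block_comb (b : nat) (v : {fset T}) : Prop :=
  exists s, [/\ uniq s, s != [::], all (fun j => j < k) s & ssum s (g b) = v].

(* The two combinations together form a vanishing combination of the family. *)
Lemma block_comb_uniq v b b' : block_comb b v -> block_comb b' v -> b = b'.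
Proof.
move=> [s [us s_ne0 sk sv]] [s' [us' _ sk' sv']]; apply: NNPP => ne_bb'.
have [j0 s_j0] : exists j, j \in s.
  by case: s s_ne0 {us sk sv} => // j s _; exists j; rewrite inE eqxx.
pose t := [seq (j, b) | j <- s] ++ [seq (j, b') | j <- s'].
have ut : uniq t.
  rewrite cat_uniq !map_inj_uniq ?us ?us' //= ?andbT; try by move=> ? ? [].
  apply/hasPn => _ /mapP [j _ ->]; apply/mapP => -[j' _ [_ eb]].
  exact: ne_bb'.
have tk jm : jm \in seq_fset tt t -> jm.1 < k.
  rewrite seq_fsetE mem_cat => /orP [] /mapP [j s_j ->].
    by move/allP: sk; apply.
  by move/allP: sk'; apply.
have t_ne0 : seq_fset tt t != fset0.
  by apply/fset0Pn; exists (j0, b); rewrite seq_fsetE mem_cat map_f.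
move: (g_indep tk t_ne0); apply/negP/negPn/eqP/fsetP => x.
rewrite -[fsum _ _]/(ssum _ _) mem_ssum inE (permP (seq_fset_perm tt t)) undup_id //.
by rewrite count_cat !count_map oddD -!mem_ssum sv sv' addbb.
Qed.

Definition comb_index (v : {fset T}) : nat := epsilon (inhabits 0) (block_comb^~ v).

(* Each subset of [W] is a nonempty combination inside at most one block
   [g b], so only the blocks [b < indep_bound W] can depend on [W]. *)
Definition indep_bound (W : {fset T}) : nat :=
  \max_(v <- fpowerset W) (comb_index v).+1.

Lemma lin_indep_beyond_bound (W : {fset T}) b : indep_bound W <= b ->
  lin_indep (fun u : nat + T => match u with inl j => j < k | inr mu => mu \in W end)
            (fun u => match u with inl j => g b j | inr mu => [fset mu] end).
Proof.
move=> le_b; apply: lin_indep_add_singletons => s us s_ne0 sk sub.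
have comb_b : block_comb b (ssum s (g b)).
  by exists s; split=> //; apply/allP => j /sk.
have comb_idx : block_comb (comb_index (ssum s (g b))) (ssum s (g b)).
  by apply: (epsilon_spec (inhabits 0) (block_comb^~ _)); exists b.
have := @leq_bigmax_seq _ (enum_fset (fpowerset W)) xpredT
  (fun v => (comb_index v).+1) (ssum s (g b)).
rewrite fpowersetE sub (block_comb_uniq comb_idx comb_b) => /(_ isT isT) lt_b.
by move: (leq_trans lt_b le_b); rewrite ltnn.
Qed.

End IndependentBlocks.

(** * Separating the ultrafilters *)

Section Separation.
Variables (T : Type) (I : T -> Prop) (xi0 : T) (p : T -> (nat -> Prop) -> Prop)
  (pi : nat -> nat) (t : T -> nat).
Hypotheses (I_countable : countable_set I) (I_xi0 : I xi0)
  (p_sel : forall xi, I xi -> selective (p xi))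
  (p_RK : forall xi eta, I xi -> I eta -> xi <> eta -> RK_incomparable (p xi) (p eta))
  (pi_mono : {homo pi : x y / x <= y})
  (pi_bounded : forall n, exists B, forall x, pi x <= n -> x < B).

Local Notation c := (cenum I xi0).
Local Notation nx := (cindex I xi0).

Let p_free xi : I xi -> free_ultrafilter (p xi).
Proof. by case/p_sel. Qed.

Definition adjacent x x' := pi x' <= (pi x).+1 /\ pi x <= (pi x').+1.
Definition near (A : nat -> Prop) x' := exists x, A x /\ adjacent x x'.

Definition spread xi (Y : nat -> Prop) := [/\ p xi Y,
  (forall x x', Y x -> Y x' -> pi x = pi x' -> x = x') &
  (forall x x', Y x -> Y x' -> odd (pi x) = odd (pi x'))].

Lemma exists_spread xi : I xi -> exists Y, spread xi Y.
Proof.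
move=> Ixi; have fxi := p_free Ixi.
case: (selective_const_or_inj (p_sel Ixi) pi) => [[n pn] | [B [pB pi_inj]]].
  have [M leM] := pi_bounded n.
  case: (uf_not_bounded fxi (A := fun x => pi x = n) (M := M)) => // x xn.
  by apply: leM; rewrite xn.
have [b pb] := uf_parity pi fxi.
exists (fun x => B x /\ odd (pi x) = b); split.
- exact: uf_meet.
- by move=> x x' [Bx _] [Bx' _]; apply: pi_inj.
- by move=> x x' [_ ->] [_ ->].
Qed.

Definition spread_set xi : nat -> Prop :=
  epsilon (inhabits (fun _ => False)) (fun Y => I xi -> spread xi Y).

Lemma spread_setP xi : I xi -> spread xi (spread_set xi).
Proof. exact: epsilon_under (@exists_spread xi). Qed.

(* On a spread set the block determines the point, so each of the three ways
   of being adjacent is separated by RK-incomparability. *)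
Lemma exists_separating xi eta : I xi -> I eta -> xi <> eta ->
  exists A, p xi A /\ ~ p eta (near A).
Proof.
move=> Ixi Ieta ne; have fxi := p_free Ixi; have feta := p_free Ieta.
have [pY Y_inj _] := spread_setP Ixi; set Y := spread_set xi in pY Y_inj.
have sep (h : nat -> nat) :
    exists A, p xi A /\ ~ p eta (fun x' => exists x, [/\ Y x, A x & pi x = h (pi x')]).
  apply: (not_RK_le_rel fxi feta (p_RK Ixi Ieta ne).1) => x1 x2 x' Yx1 Yx2 e1 e2.
  by apply: Y_inj; rewrite // e1 e2.
have [A0 [pA0 nA0]] := sep id; have [A1 [pA1 nA1]] := sep succn.
have [A2 [pA2 nA2]] := sep predn.
exists (fun x => [/\ Y x, A0 x, A1 x & A2 x]); split.
  apply: (uf_mono fxi (uf_meet fxi pY (uf_meet fxi pA0 (uf_meet fxi pA1 pA2)))).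
  by move=> x [? [? []]].
move=> pnear; have : p eta (fun x' =>
    (exists x, [/\ Y x, A0 x & pi x = pi x']) \/
    (exists x, [/\ Y x, A1 x & pi x = (pi x').+1]) \/
    (exists x, [/\ Y x, A2 x & pi x = (pi x').-1])).
  apply: (uf_mono feta pnear) => x' [x [[Yx A0x A1x A2x] [le1 le2]]].
  have : pi x = pi x' \/ pi x = (pi x').+1 \/ pi x = (pi x').-1 by lia.
  by case=> [e|[e|e]]; [left | right; left | right; right]; exists x.
by case/(uf_join3 feta) => [/nA0 |[/nA1 | /nA2]].
Qed.

Definition sep_set xi eta : nat -> Prop :=
  epsilon (inhabits (fun _ => True))
    (fun A => [/\ I xi, I eta & xi <> eta] -> p xi A /\ ~ p eta (near A)).

Lemma sep_setP xi eta : I xi -> I eta -> xi <> eta ->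
  p xi (sep_set xi eta) /\ ~ p eta (near (sep_set xi eta)).
Proof.
move=> Ixi Ieta ne; have sep : [/\ I xi, I eta & xi <> eta] ->
    exists A, p xi A /\ ~ p eta (near A) by case; apply: exists_separating.
by apply: (epsilon_under _ sep).
Qed.

Definition isolated xi (Z : nat -> Prop) := [/\ p xi Z,
  (forall x, Z x -> spread_set xi x) &
  (forall eta, I eta -> eta <> xi -> ~ p eta (near Z))].

(* A pseudo-intersection of all [sep_set xi (c n)] is separated from every
   other [p eta] at once, up to a bounded set. *)
Lemma exists_isolated xi : I xi -> exists Z, isolated xi Z.
Proof.
move=> Ixi; have fxi := p_free Ixi.
pose X n x := c n = xi \/ sep_set xi (c n) x.
have pX n : p xi (X n).
  case: (classic (c n = xi)) => [cn | ncn].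
    by apply: (uf_mono fxi (uf_tail fxi 0)) => x _; left.
  have [pS _] := sep_setP Ixi (cenumP I_xi0 n) (nesym ncn).
  by apply: (uf_mono fxi pS) => x; right.
have [Y' [pY' Y'_almost]] := selective_pseudo_intersection (p_sel Ixi) pX.
have [pY _ _] := spread_setP Ixi.
exists (fun x => Y' x /\ spread_set xi x); split; first exact: uf_meet.
  by move=> x [].
move=> eta Ieta ne pnear; have feta := p_free Ieta.
have [n cn] := cenum_onto xi0 I_countable Ieta.
have [M leM] := Y'_almost n.
have [B leB] := pi_bounded (\max_(z < M) pi z).+1.
have : p eta (fun x' => near (sep_set xi eta) x' \/ x' < B).
  apply: (uf_mono feta pnear) => x' [x [[Y'x _] [le1 le2]]].
  case: (classic (X n x)) => [[cnxi | Sx] | nXx].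
  - by case: ne; rewrite -cn.
  - by left; exists x; rewrite -cn.
  - right; apply: leB; have := @leq_bigmax _ (fun z : 'I_M => pi z) (Ordinal (leM x Y'x nXx)).
    rewrite /=; lia.
case/(uf_join feta) => [|pB]; first exact: (sep_setP Ixi Ieta (nesym ne)).2.
exact: (uf_not_bounded feta (A := fun x => x < B) (fun _ lt => lt) pB).
Qed.

Definition iso_set xi : nat -> Prop :=
  epsilon (inhabits (fun _ => False)) (fun Z => I xi -> isolated xi Z).

Lemma iso_setP xi : I xi -> isolated xi (iso_set xi).
Proof. exact: epsilon_under (@exists_isolated xi). Qed.

(* Only the finitely many [c i] enumerated before [xi] are avoided explicitly;
   the later ones avoid [xi] themselves. *)
Definition sep_family xi x : Prop := [/\ iso_set xi x, t xi <= x &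
  forall i, i < nx xi -> c i <> xi -> ~ near (iso_set (c i)) x].

Lemma sep_family_in xi : I xi -> p xi (sep_family xi).
Proof.
move=> Ixi; have fxi := p_free Ixi.
have avoid n : p xi (fun x => forall i, i < n -> c i <> xi -> ~ near (iso_set (c i)) x).
  elim: n => [|n IH]; first by apply: (uf_mono fxi (uf_tail fxi 0)).
  have avoid_n : p xi (fun x => c n <> xi -> ~ near (iso_set (c n)) x).
    case: (classic (c n = xi)) => [cn | ncn].
      by apply: (uf_mono fxi (uf_tail fxi 0)).
    have [_ _ iso_n] := iso_setP (cenumP I_xi0 n).
    by apply: (uf_mono fxi (uf_compl fxi (iso_n xi Ixi (nesym ncn)))) => x not_near _.
  apply: (uf_mono fxi (uf_meet fxi IH avoid_n)) => x [before at_n] i.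
  by rewrite ltnS leq_eqVlt => /orP [/eqP -> | /before].
have [pZ _ _] := iso_setP Ixi.
apply: (uf_mono fxi (uf_meet fxi pZ (uf_meet fxi (uf_tail fxi (t xi)) (avoid (nx xi))))).
by move=> x [? []].
Qed.

Lemma sep_family_not_adjacent xi eta x x' : I xi -> I eta -> xi <> eta ->
  sep_family xi x -> sep_family eta x' -> ~ adjacent x x'.
Proof.
move=> Ixi Ieta ne [Zx _ avoid_x] [Zx' _ avoid_x'] adj.
have cxi := cindexK xi0 I_countable Ixi; have ceta := cindexK xi0 I_countable Ieta.
case: (ltngtP (nx xi) (nx eta)) => [lt|lt|eq_idx].
- by apply: (avoid_x' _ lt); rewrite cxi //; exists x.
- by apply: (avoid_x _ lt); rewrite ceta //; [apply: nesym | exists x'; case: adj].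
- by apply: ne; rewrite -cxi -ceta eq_idx.
Qed.

Lemma sep_family_uniq xi eta x : I xi -> I eta ->
  sep_family xi x -> sep_family eta x -> xi = eta.
Proof.
move=> Ixi Ieta Vx Vx'; apply: NNPP => ne.
by apply: (sep_family_not_adjacent Ixi Ieta ne Vx Vx'); split.
Qed.

Lemma sep_family_far xi eta x x' : I xi -> I eta ->
  sep_family xi x -> sep_family eta x' -> x < x' -> (pi x).+2 <= pi x'.
Proof.
move=> Ixi Ieta Vx Vx' lt_xx'; have := pi_mono (ltnW lt_xx').
case: (classic (xi = eta)) => [eq | ne]; last first.
  by have := sep_family_not_adjacent Ixi Ieta ne Vx Vx'; rewrite /adjacent; lia.
subst eta; have [_ Y_inj Y_par] := spread_setP Ixi; have [_ ZY _] := iso_setP Ixi.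
case: Vx Vx' => [/ZY Yx _ _] [/ZY Yx' _ _].
have ne_blocks : pi x <> pi x' by move=> /(Y_inj _ _ Yx Yx') eq; rewrite eq ltnn in lt_xx'.
have ne_next : pi x' <> (pi x).+1.
  by move=> eq; move: (Y_par _ _ Yx Yx'); rewrite eq /=; case: (odd (pi x)).
lia.
Qed.

End Separation.

(** * The construction *)

Section Construction.
Variables (T : choiceType) (E I : T -> Prop) (F : {fset T}) (k : T -> nat)
  (p : T -> (nat -> Prop) -> Prop) (g : T -> nat -> nat -> {fset T})
  (d : T -> nat -> {fset T}) (y : nat -> T).
Hypotheses (E_countable : countable_set E) (I_sub_E : forall x, I x -> E x)
  (I_nonempty : exists x, I x) (F_sub_E : forall x, x \in F -> E x)
  (p_sel : forall xi, I xi -> selective (p xi))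
  (p_RK : forall xi eta, I xi -> I eta -> xi <> eta -> RK_incomparable (p xi) (p eta))
  (g_indep : forall xi, I xi ->
     lin_indep (fun jm : nat * nat => jm.1 < k xi) (fun jm => g xi jm.2 jm.1))
  (g_sub_E : forall xi m j, I xi -> j < k xi -> forall x, x \in g xi m j -> E x)
  (d_sub_E : forall xi j, I xi -> j < k xi -> forall x, x \in d xi j -> E x)
  (y_inj : injective y) (y_E : forall n, E (y n)).

Definition off_y (n : nat) : T :=
  let x := cenum E (y 0) n in
  if excluded_middle_informative (exists t, y t = x) then y 0 else x.

(* Position [3q] lists [E] outside the range of [y], positions [3q+1] and
   [3q+2] list [y (2q)] and [y (2q+1)]. *)
Definition enumE (i : nat) : T :=
  if i %% 3 == 0 then off_y (i %/ 3)
  else if i %% 3 == 1 then y (2 * (i %/ 3)) else y (2 * (i %/ 3)).+1.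

Lemma enumE_E i : E (enumE i).
Proof.
rewrite /enumE /off_y; case: ifP => _; last by case: ifP.
by case: excluded_middle_informative => [yes | no]; [apply: y_E | apply: (cenumP (y_E 0))].
Qed.

Definition y_position (n : nat) : nat := (n./2 * 3 + (1 + odd n))%N.

Lemma enumE_y n : enumE (y_position n) = y n.
Proof.
have lt3 : 1 + odd n < 3 by case: (odd n).
rewrite /enumE /y_position modnMDl modn_small // divnMDl // divn_small // addn0.
by case: (odd n) (odd_double_half n) => /= half_n; congr y; lia.
Qed.

Lemma enumE_onto x : E x -> exists i, enumE i = x.
Proof.
move=> Ex; have [n en] := cenum_onto (y 0) E_countable Ex.
case: (classic (exists t, y t = x)) => [[t <-] | not_y].
  by exists (y_position t); apply: enumE_y.
exists (n * 3); rewrite /enumE modnMl eqxx mulnK // /off_y en.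
by case: excluded_middle_informative.
Qed.

Definition index_of (x : T) : nat := epsilon (inhabits 0) (fun i => enumE i = x).

Lemma index_ofK x : E x -> enumE (index_of x) = x.
Proof. by move/enumE_onto; apply: epsilon_spec. Qed.

Definition stage (M : nat) : {fset T} := seq_fset tt [seq enumE i | i <- iota 0 (3 * M + 3)].

Lemma mem_stage x M : x \in stage M <-> exists2 i, i < 3 * M + 3 & enumE i = x.
Proof.
rewrite seq_fsetE; split; first by case/mapP => i; rewrite mem_iota add0n => lt_i ->; exists i.
by case=> i lt_i <-; apply: map_f; rewrite mem_iota add0n.
Qed.

Lemma stage_E x M : x \in stage M -> E x.
Proof. by case/mem_stage => i _ <-; apply: enumE_E. Qed.

Lemma stage_mono M M' : M <= M' -> stage M `<=` stage M'.
Proof.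
move=> le_M; apply/fsubsetP => x /mem_stage [i lt_i <-].
by apply/mem_stage; exists i => //; lia.
Qed.

Lemma y_in_stage n M : y n \in stage M <-> n < 2 * M.+1.
Proof.
split; last first.
  move=> lt_n; apply/mem_stage; exists (y_position n); last exact: enumE_y.
  by rewrite /y_position; have := odd_double_half n; case: (odd n) => /=; lia.
case/mem_stage => i lt_i; have le_q : i %/ 3 <= M by rewrite -ltnS ltn_divLR //; lia.
rewrite /enumE; case: ifP => _.
  rewrite /off_y; case: excluded_middle_informative => [_ /y_inj <- // | not_y eq_y].
  by case: (not_y (ex_intro _ n (esym eq_y))).
by case: ifP => _ /y_inj <-; lia.
Qed.

Definition height (A : {fset T}) : nat := \max_(x <- A) index_of x.

Lemma sub_stage A M : (forall x, x \in A -> E x) -> height A <= M -> A `<=` stage M.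
Proof.
move=> AE le_M; apply/fsubsetP => x Ax; apply/mem_stage.
exists (index_of x); last exact: index_ofK (AE x Ax).
have := @leq_bigmax_seq _ (enum_fset A) xpredT index_of x Ax isT; rewrite -/(height A); lia.
Qed.

Definition pt_height (xi : T) : nat :=
  maxn (index_of xi) (\max_(j < k xi) height (d xi j)).

Definition next_stage (M b : nat) : nat :=
  maxn M.+1 (\max_(i < 3 * M + 3) \max_(j < k (enumE i)) height (g (enumE i) b j)).

Lemma next_stage_gt M b : M < next_stage M b.
Proof. exact: leq_maxl. Qed.

Lemma next_stage_mono M M' b : M <= M' -> next_stage M b <= next_stage M' b.
Proof.
move=> le_M; rewrite geq_max (leq_trans _ (leq_maxl _ _)) ?ltnS //=.
apply/bigmax_leqP => i _; apply: leq_trans (leq_maxr _ _).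
have lt_i : i < 3 * M' + 3 by apply: leq_trans (ltn_ord i) _; lia.
exact: (@leq_bigmax _ (fun i : 'I_(3 * M' + 3) => _) (Ordinal lt_i)).
Qed.

Lemma stage_next_closed M b xi j : xi \in stage M -> I xi -> j < k xi ->
  g xi b j `<=` stage (next_stage M b).
Proof.
case/mem_stage => i lt_i <- Ixi lt_j; apply: sub_stage; first exact: g_sub_E Ixi lt_j.
apply: leq_trans (leq_maxr _ _); apply: leq_trans (@leq_bigmax _ _ (Ordinal lt_i)) => /=.
exact: (@leq_bigmax _ (fun j : 'I_(k (enumE i)) => _) (Ordinal lt_j)).
Qed.

(* While the current term of [b] is [x], stage indices stay below
   [maxn (maxn (height F) x) (prev_bound x)] (see [stage_idx_le]), so
   [stage_bound x] bounds the stage that follows. *)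
Fixpoint stage_bound (x : nat) : nat :=
  let prev := if x is x'.+1 then stage_bound x' else 0 in
  maxn prev (next_stage (maxn (maxn (height F) x) prev) x).

Definition prev_bound (x : nat) : nat := if x is x'.+1 then stage_bound x' else 0.

Lemma stage_bound_next x :
  next_stage (maxn (maxn (height F) x) (prev_bound x)) x <= stage_bound x.
Proof. by case: x => [|x]; rewrite /= leq_maxr. Qed.

Lemma stage_bound_gt x : maxn (height F) x < stage_bound x.
Proof.
apply: leq_trans (stage_bound_next x); apply: leq_trans (next_stage_gt _ _).
by rewrite ltnS leq_maxl.
Qed.

Lemma stage_bound_mono : {homo stage_bound : x x' / x <= x'}.
Proof. by apply: homo_leq leqnn leq_trans _ => x; rewrite /= leq_maxl. Qed.

Definition indep_threshold (xi : T) (K : nat) : nat :=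
  \max_(K' < K.+1) indep_bound (k xi) (g xi) (stage K').

Lemma indep_threshold_mono xi : {homo indep_threshold xi : K K' / K <= K'}.
Proof.
move=> K K' le_K; apply/bigmax_leqP => i _.
have lt_i : i < K'.+1 by apply: leq_trans (ltn_ord i) _.
exact: (@leq_bigmax _ (fun i : 'I_K'.+1 => _) (Ordinal lt_i)).
Qed.

Lemma indep_threshold_lin_indep xi K b : I xi -> indep_threshold xi K <= b ->
  lin_indep (fun u : nat + T => match u with inl j => j < k xi | inr mu => mu \in stage K end)
            (fun u => match u with inl j => g xi b j | inr mu => [fset mu] end).
Proof.
move=> Ixi le_b; apply: lin_indep_beyond_bound; first exact: g_indep.
by apply: leq_trans le_b; apply: (@leq_bigmax _ (fun i : 'I_K.+1 => _) ord_max).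
Qed.

Definition xi0 : T := epsilon (inhabits (y 0)) I.

Let I_xi0 : I xi0 := epsilon_spec (inhabits (y 0)) I I_nonempty.
Let I_countable : countable_set I := countable_subset E_countable I_sub_E.

(* Large enough to keep [b] independent from every stage up to [stage_bound x]
   for the first [x.+1] points of [I]. *)
Definition gap (x : nat) : nat :=
  \max_(i < x.+1) indep_threshold (cenum I xi0 i) (stage_bound x).

Lemma gap_mono : {homo gap : x x' / x <= x'}.
Proof.
move=> x x' le_x; apply/bigmax_leqP => i _.
apply: leq_trans (indep_threshold_mono _ (stage_bound_mono le_x)) _.
have lt_i : i < x'.+1 by apply: leq_trans (ltn_ord i) _.
exact: (@leq_bigmax _ (fun i : 'I_x'.+1 => _) (Ordinal lt_i)).
Qed.

(* The first term puts [xi] and the [d xi j] into [Es m] when [r_seq m = xi];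
   the second covers the stages not handled by [gap] (see [indep_threshold_le]). *)
Definition threshold (xi : T) : nat :=
  maxn (pt_height xi) (indep_threshold xi
    (maxn (maxn (height F) (pt_height xi)) (stage_bound (cindex I xi0 xi)))).

Local Notation V := (sep_family I xi0 p (block gap) threshold).

Let block_gap_bounded n : exists B, forall x, block gap x <= n -> x < B.
Proof. by exists (block_start gap n.+1); apply: block_bounded. Qed.

Lemma V_in xi : I xi -> p xi (V xi).
Proof. exact: (sep_family_in threshold I_countable I_xi0 p_sel p_RK block_gap_bounded). Qed.

Lemma V_uniq xi eta x : I xi -> I eta -> V xi x -> V eta x -> xi = eta.
Proof. exact: (sep_family_uniq I_countable). Qed.

Lemma V_far xi eta x x' : I xi -> I eta -> V xi x -> V eta x' -> x < x' ->
  (block gap x).+2 <= block gap x'.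
Proof.
exact: (sep_family_far I_countable I_xi0 p_sel p_RK (block_mono gap) block_gap_bounded).
Qed.

Definition chosen (x : nat) : Prop := exists xi, I xi /\ V xi x.

Lemma chosen_unbounded m : exists x, chosen x /\ m < x.
Proof.
have [_ p_inf] := (p_sel I_xi0).1.
have [x [lt_x Vx]] := p_inf _ (V_in I_xi0) m.+1.
by exists x; split=> //; exists xi0.
Qed.

Definition b_seq : nat -> nat := sorted_enum chosen.

Definition r_seq (m : nat) : T :=
  epsilon (inhabits xi0) (fun xi => I xi /\ V xi (b_seq m)).

Lemma r_seqP m : I (r_seq m) /\ V (r_seq m) (b_seq m).
Proof. exact: (epsilon_spec _ (fun xi => I xi /\ V xi _) (sorted_enumP chosen_unbounded m)). Qed.

Lemma r_seq_I m : I (r_seq m).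
Proof. exact: (r_seqP m).1. Qed.

Lemma b_seq_lt m : b_seq m < b_seq m.+1.
Proof. exact: sorted_enum_lt chosen_unbounded m. Qed.

Lemma b_seq_gap m : gap (b_seq m) < b_seq m.+1.
Proof.
have [Ir Vr] := r_seqP m; have [Ir' Vr'] := r_seqP m.+1.
exact: (block_far gap_mono (V_far Ir Ir' Vr Vr' (b_seq_lt m))).
Qed.

Lemma p_b_seq xi : I xi -> p xi (fun n => exists i, r_seq i = xi /\ b_seq i = n).
Proof.
move=> Ixi; apply: (uf_mono (p_sel Ixi).1 (V_in Ixi)) => x Vx.
have [i bi] := sorted_enum_onto chosen_unbounded (ex_intro _ xi (conj Ixi Vx)).
exists i; split=> //; have [Ir Vr] := r_seqP i.
by rewrite /b_seq bi in Vr; apply: (V_uniq Ir Ixi Vr Vx).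
Qed.

Definition stage_idx (m : nat) : nat :=
  maxn (maxn (height F) (pt_height (r_seq m)))
       (if m is m'.+1 then stage_bound (b_seq m') else 0).

Definition Es (m : nat) : {fset T} := stage (stage_idx m).

Lemma threshold_le m : threshold (r_seq m) <= b_seq m.
Proof. by case: (r_seqP m) => _ []. Qed.

Lemma pt_height_le m : pt_height (r_seq m) <= b_seq m.
Proof. exact: leq_trans (leq_maxl _ _) (threshold_le m). Qed.

Lemma stage_idx_le m : stage_idx m <= maxn (maxn (height F) (b_seq m)) (prev_bound (b_seq m)).
Proof.
have le_pt := pt_height_le m; case: m le_pt => [|m] le_pt; rewrite /stage_idx; first lia.
have := b_seq_lt m; case: (b_seq m.+1) le_pt => [|x] //= le_pt; rewrite ltnS.
by move/stage_bound_mono; lia.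
Qed.

Lemma stage_idx_next m : next_stage (stage_idx m) (b_seq m) <= stage_idx m.+1.
Proof.
apply: leq_trans (next_stage_mono _ (stage_idx_le m)) _.
by apply: leq_trans (stage_bound_next _) _; rewrite leq_maxr.
Qed.

(* Either the threshold of [r_seq m] already covers [stage_idx m], or
   [stage_idx m] is [stage_bound (b_seq m')] and [r_seq m] is among the
   points handled by [gap (b_seq m')]. *)
Lemma indep_threshold_le m : indep_threshold (r_seq m) (stage_idx m) <= b_seq m.
Proof.
have Ir := r_seq_I m; move: (threshold_le m); rewrite /threshold geq_max => /andP [_].
set K0 := maxn _ (stage_bound _) => le_K0.
case: (leqP (stage_idx m) K0) => [le_idx | ].
  exact: leq_trans (indep_threshold_mono _ le_idx) le_K0.
clear le_K0; rewrite {}/K0; case: m Ir => [|m] Ir; rewrite /stage_idx; first lia.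
move=> lt_idx; have -> : maxn (maxn (height F) (pt_height (r_seq m.+1)))
    (stage_bound (b_seq m)) = stage_bound (b_seq m) by lia.
have lt_nx : cindex I xi0 (r_seq m.+1) < (b_seq m).+1.
  by rewrite ltnS leqNgt; apply/negP => /ltnW /stage_bound_mono; lia.
apply: leq_trans (ltnW (b_seq_gap m)).
have := @leq_bigmax _ (fun i : 'I_(b_seq m).+1 =>
  indep_threshold (cenum I xi0 i) (stage_bound (b_seq m))) (Ordinal lt_nx).
by rewrite /= cindexK.
Qed.

Lemma stage_idx_lt m : stage_idx m < stage_idx m.+1.
Proof. exact: leq_trans (next_stage_gt _ _) (stage_idx_next m). Qed.

Lemma F_sub_Es0 : F `<=` Es 0.
Proof. by apply: sub_stage => //; rewrite /stage_idx; lia. Qed.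

Lemma Es_cover x : E x <-> exists i, x \in Es i.
Proof.
split=> [Ex | [i /stage_E] //]; exists (index_of x).+1; apply/mem_stage.
exists (index_of x); last exact: index_ofK.
have := stage_bound_gt (b_seq (index_of x)); have := sorted_enum_ge chosen_unbounded (index_of x).
rewrite /stage_idx -/b_seq; lia.
Qed.

Lemma r_seq_in_Es m : r_seq m \in Es m.
Proof.
apply/mem_stage; exists (index_of (r_seq m)); last exact: index_ofK (I_sub_E (r_seq_I m)).
by rewrite /stage_idx /pt_height; lia.
Qed.

Lemma d_sub_Es m j : j < k (r_seq m) -> d (r_seq m) j `<=` Es m.
Proof.
move=> lt_j; apply: sub_stage; first exact: d_sub_E (r_seq_I m) lt_j.
have := @leq_bigmax _ (fun j : 'I_(k (r_seq m)) => height (d (r_seq m) j)) (Ordinal lt_j).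
by rewrite /stage_idx /pt_height /=; lia.
Qed.

Lemma Es_next m : Es m `<=` Es m.+1 /\
  forall xi j, xi \in Es m -> I xi -> j < k xi -> g xi (b_seq m) j `<=` Es m.+1.
Proof.
split; first exact/stage_mono/ltnW/stage_idx_lt.
move=> xi j Es_xi Ixi lt_j; apply: fsubset_trans (stage_next_closed _ Es_xi Ixi lt_j) _.
exact/stage_mono/stage_idx_next.
Qed.

Lemma Es_lin_indep m :
  lin_indep (fun u : nat + T => match u with inl j => j < k (r_seq m) | inr mu => mu \in Es m end)
            (fun u => match u with inl j => g (r_seq m) (b_seq m) j | inr mu => [fset mu] end).
Proof. exact: indep_threshold_lin_indep (r_seq_I m) (indep_threshold_le m). Qed.

Lemma y_in_Es : exists N : nat -> nat, (forall i, N i < N i.+1) /\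
  forall i n, y n \in Es i <-> n < 2 * N i.
Proof.
exists (fun i => (stage_idx i).+1).
by split=> [i|i n]; [apply: stage_idx_lt | apply: y_in_stage].
Qed.

Lemma r_seq_onto xi : I xi -> exists m, r_seq m = xi.
Proof. by move=> Ixi; case: (uf_exists (p_sel Ixi).1 (p_b_seq Ixi)) => n [m [rm _]]; exists m. Qed.

End Construction.

Theorem mainTheorem5 (T : choiceType) (E I : T -> Prop) (F : {fset T})
  (k : T -> nat) (p : T -> (nat -> Prop) -> Prop)
  (g : T -> nat -> nat -> {fset T}) (d : T -> nat -> {fset T})
  (y : nat -> T) :
  countable_set E ->
  (forall x, I x -> E x) -> (exists x, I x) ->
  (forall x, x \in F -> E x) ->
  (forall xi, I xi -> selective (p xi)) ->
  (forall xi eta, I xi -> I eta -> xi <> eta -> RK_incomparable (p xi) (p eta)) ->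
  (forall xi m j, I xi -> j < k xi -> forall x, x \in g xi m j -> E x) ->
  (forall xi, I xi ->
     lin_indep (fun jm : nat * nat => jm.1 < k xi) (fun jm => g xi jm.2 jm.1)) ->
  (forall xi j, I xi -> j < k xi -> forall x, x \in d xi j -> E x) ->
  injective y -> (forall n, E (y n)) ->
  exists (b : nat -> nat) (r : nat -> T) (Es : nat -> {fset T}),
    (forall i, b i < b i.+1) /\
    ((forall m, I (r m)) /\ (forall xi, I xi -> exists m, r m = xi)) /\
    (forall i x, x \in Es i -> E x) /\
    ((* (a) *) F `<=` Es 0 /\
        (* (b) *) (forall x, E x <-> exists i, x \in Es i) /\
        (* (c) *) (forall m, r m \in Es m) /\
        (* (d) *) (forall m j, j < k (r m) -> d (r m) j `<=` Es m) /\
        (* (e) *) (forall m, Es m `<=` Es m.+1 /\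
                     forall xi j, xi \in Es m -> I xi -> j < k xi ->
                       g xi (b m) j `<=` Es m.+1) /\
        (* (f) *) (forall m,
                     lin_indep
                       (fun u : nat + T => match u with
                                           | inl j => j < k (r m)
                                           | inr mu => mu \in Es m end)
                       (fun u => match u with
                                 | inl j => g (r m) (b m) j
                                 | inr mu => [fset mu] end)) /\
        (* (g) *) (forall xi, I xi -> p xi (fun n => exists i, r i = xi /\ b i = n)) /\
        (* (h) *) (exists N : nat -> nat, (forall i, N i < N i.+1) /\
                     forall i n, y n \in Es i <-> n < 2 * N i)).
Proof.
move=> E_countable I_sub_E I_nonempty F_sub_E p_sel p_RK g_sub_E g_indep d_sub_E y_inj y_E.
exists (b_seq E I F k p g d y), (r_seq E I F k p g d y), (Es E I F k p g d y).
split; first by move=> m; apply: b_seq_lt.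
split; first by split=> [m | xi Ixi]; [apply: r_seq_I | apply: r_seq_onto].
split; first by move=> m x; apply: stage_E.
split; first by apply: F_sub_Es0.
split; first by move=> x; apply: Es_cover.
split; first by move=> m; apply: r_seq_in_Es.
split; first by move=> m j; apply: d_sub_Es.
split; first by move=> m; apply: Es_next.
split; first by move=> m; apply: Es_lin_indep.
split; first by move=> xi; apply: p_b_seq.
by apply: y_in_Es.
Qed.
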